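(* Assume the conditional linking at random (CLAR) assumption $P(L=1\mid \tilde{T}, \Delta, Q=0, \mathbf{X}) = P(L=1\mid Q=0, \mathbf{X})$ holds. Then for any $(\boldsymbol\beta,\lambda_0)$, $$\mathbb{E}\big(l(\boldsymbol\beta,\lambda_0)\big) = \mathbb{E}\left[\frac{I(L+Q>0)\, l(\boldsymbol\beta,\lambda_0)}{Q + (1-Q)\,P(L=1\mid \mathbf{X}, Q=0)}\right],$$ where $l(\boldsymbol\beta,\lambda_0) = \log\big(\lambda(\tilde{T}\mid \mathbf{X})^{\Delta} S(\tilde{T}\mid \mathbf{X})\big)$ is the Cox log-likelihood contribution of a single observation, with $\lambda(t\mid\mathbf{X}) = \lambda_0(t)\exp(\boldsymbol\beta^T\mathbf{X})$ and $S(t\mid\mathbf{X})$ the corresponding conditional survival function.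
   Context: Participants of a clinical trial are possibly linked to an observational follow-up dataset. $T$ is the failure time, $C_1$ the censoring time within the trial, $C_2$ the censoring time in the observational follow-up, $C=\max(C_1,C_2)$, $\tilde{T}=\min(T,C)$, $\Delta=I(T\le C)$, $Q=I(T\le C_1)$ is the in-trial event indicator, $L\in\{0,1\}$ the linkage indicator, and $\mathbf{X}\in\mathbb{R}^p$ the (time-independent) covariates including treatment. The pair $(\tilde{T},\Delta)$ is observed when $L=1$ or $Q=1$, and missing when $L=0,Q=0$. Expectations are over $(L,Q,\tilde{T},\Delta,\mathbf{X})$, and $P(L=1\mid \mathbf{X},Q=0)>0$ so the weight is well defined. *)

From HB Require Import structures.
From mathcomp Require Import all_boot all_order all_algebra.
From mathcomp Require Import all_classical all_reals all_analysis.
Set Implicit Arguments. Unset Strict Implicit. Unset Printing Implicit Defensive.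
Import Order.TTheory GRing.Theory Num.Theory.
Local Open Scope classical_set_scope.
Local Open Scope ring_scope.

Section Model.
Context {d : measure_display} {Omega : measurableType d} {R : realType}.

Definition cens (C1 C2 : Omega -> R) (w : Omega) : R := Num.max (C1 w) (C2 w).
Definition obs_time (T C1 C2 : Omega -> R) (w : Omega) : R :=
  Num.min (T w) (cens C1 C2 w).
Definition event_ind (T C1 C2 : Omega -> R) (w : Omega) : bool :=
  T w <= cens C1 C2 w.
Definition trial_ind (T C1 : Omega -> R) (w : Omega) : bool := T w <= C1 w.

Definition linpred (p : nat) (beta : 'I_p -> R) (X : 'I_p -> Omega -> R)
  (w : Omega) : R := \sum_(i < p) beta i * X i w.

Definition sigma_X (p : nat) (X : 'I_p -> Omega -> R) : set (set Omega) :=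
  <<s [set A | exists i B, measurable B /\ A = X i @^-1` B] >>.

Definition sigma_TDX (p : nat) (Tt : Omega -> R) (Dl : Omega -> bool)
  (X : 'I_p -> Omega -> R) : set (set Omega) :=
  <<s [set A | (exists B, measurable B /\ A = Tt @^-1` B)
            \/ A = [set w | Dl w]
            \/ (exists i B, measurable B /\ A = X i @^-1` B)] >>.

(* pi is a version of P(L = 1 | G, Q = 0) for the sigma-algebra G:
   pi is G-measurable and, for every A in G,
   E[ 1{L=1} 1{Q=0} 1_A ] = E[ pi 1{Q=0} 1_A ]. *)
Definition cond_prob_L1_Q0 (P : probability Omega R) (G : set (set Omega))
  (L Qb : Omega -> bool) (pi : Omega -> R) : Prop :=
  (forall B : set R, measurable B -> G (pi @^-1` B)) /\
  forall A, G A ->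
    (\int[P]_(w in A `&` [set w | ~~ Qb w]) (if L w then 1 else 0)%:E =
     \int[P]_(w in A `&` [set w | ~~ Qb w]) (pi w)%:E)%E.

Definition cumhaz (lambda0 : R -> R) (t : R) : \bar R :=
  (\int[lebesgue_measure]_(s in `[0%R, t]%classic) (lambda0 s)%:E)%E.

Definition cox_hazard (lambda0 : R -> R) (lp : R) (t : R) : R :=
  lambda0 t * expR lp.

Definition cox_surv (lambda0 : R -> R) (lp : R) (t : R) : \bar R :=
  expeR (- (cumhaz lambda0 t * (expR lp)%:E))%E.

Definition cox_loglik (p : nat) (beta : 'I_p -> R) (lambda0 : R -> R)
  (X : 'I_p -> Omega -> R) (Tt : Omega -> R) (Dl : Omega -> bool)
  (w : Omega) : \bar R :=
  lne ((if Dl w then (cox_hazard lambda0 (linpred beta X w) (Tt w))%:E else 1%E)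
       * cox_surv lambda0 (linpred beta X w) (Tt w))%E.

End Model.

(* Split the sample space along the in-trial indicator Q.  Where Q = 1 the weight
   is 1.  Where Q = 0 it is L / pi, and CLAR says that pi is a version of
   P(L = 1 | T~, Delta, X, Q = 0): the measures A |-> E[L; A, Q = 0] and
   A |-> E[pi; A, Q = 0] agree on sigma(T~, Delta, X), hence (approximating by
   simple functions) E[L h; Q = 0] = E[pi h; Q = 0] for every nonnegative
   sigma(T~, Delta, X)-measurable h.  With h = g / pi this reads
   E[g; Q = 0] = E[(L / pi) g; Q = 0].  The log-likelihood l is
   sigma(T~, Delta, X)-measurable, so this applies to its positive and negative
   parts; since the weight is nonnegative, the parts of (weight * l) are
   weight * l^+ and weight * l^-, and the identity holds even when the
   expectations are infinite. *)

From HB Require Import structures.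
From mathcomp Require Import all_boot all_order all_algebra.
From mathcomp Require Import all_classical all_reals all_analysis.
From mathcomp Require Import measurable_realfun.
Set Implicit Arguments. Unset Strict Implicit. Unset Printing Implicit Defensive.
Import Order.TTheory GRing.Theory Num.Theory.
Import HBNNSimple.
Local Open Scope classical_set_scope.
Local Open Scope ring_scope.

Lemma integral_mul_indic d (T : measurableType d) (R : realType)
    (mu : {measure set T -> \bar R}) (D A : set T) (f : T -> \bar R) :
  (\int[mu]_(x in D) (f x * (\1_A x)%:E) = \int[mu]_(x in A `&` D) f x)%E.
Proof. by rewrite integral_mkcondl epatch_indic. Qed.

Lemma ge0_integral_setUC d (T : measurableType d) (R : realType)
    (mu : {measure set T -> \bar R}) (A : set T) (f : T -> \bar R) :
  measurable A -> measurable_fun setT f -> (forall x, (0 <= f x)%E) ->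
  (\int[mu]_x f x = \int[mu]_(x in A) f x + \int[mu]_(x in ~` A) f x)%E.
Proof.
move=> mA mf f_ge0; rewrite -(setUv A) ge0_integral_setU ?setUv //.
- exact: measurableC.
- by rewrite disj_set2E setICr.
Qed.

Lemma funeposMl (T : Type) (R : realType) (a : T -> R) (f : T -> \bar R) :
  (forall x, 0 <= a x) ->
  ((fun x => (a x)%:E * f x)^\+ = (fun x => (a x)%:E * f^\+ x))%E.
Proof.
by move=> a_ge0; apply/funext => x; rewrite !funeposE maxe_pMr ?lee_fin // mule0.
Qed.

Lemma funenegMl (T : Type) (R : realType) (a : T -> R) (f : T -> \bar R) :
  (forall x, 0 <= a x) ->
  ((fun x => (a x)%:E * f x)^\- = (fun x => (a x)%:E * f^\- x))%E.
Proof.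
by move=> a_ge0; apply/funext => x; rewrite !funenegE -muleN maxe_pMr ?lee_fin // mule0.
Qed.

Lemma measurable_funV d (T : measurableType d) (R : realType) (f : T -> R) :
  measurable_fun setT f -> measurable_fun setT (fun x => (f x)^-1).
Proof.
move=> mf; have -> : (fun x => (f x)^-1) =
    (fun x => if 0 <= f x then f x `^ (-1) else - (- f x) `^ (-1)).
  apply/funext => x; case: ifPn => [fx_ge0|]; first by rewrite powRN powRr1.
  rewrite -ltNge -oppr_gt0 => /ltW fx_le0.
  by rewrite powRN powRr1 // invrN opprK.
apply: measurable_fun_ifT.
- exact: measurable_fun_ler.
- exact: measurableT_comp (measurable_powR (-1)) mf.
- apply: measurableT_comp => //; apply: (measurableT_comp (measurable_powR (-1))).
  by apply: measurableT_comp.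
Qed.

Lemma nondecreasing_measurable_ereal (R : realType) (g : R -> \bar R) :
  {homo g : x y / (x <= y)%R >-> (x <= y)%E} -> measurable_fun setT g.
Proof.
move=> nd; apply: (measurability _ (ErealGenOInfty.measurableE R)) => //.
move=> _ [_ [r ->] <-]; rewrite setTI.
apply: is_interval_measurable => x y /= gx _ z /andP[xz _].
by move: gx; rewrite /= !in_itv /= !andbT => /lt_le_trans; apply; exact: nd.
Qed.

Lemma nondecreasing_emeasurable (R : realType) (g : \bar R -> \bar R) :
  {homo g : x y / (x <= y)%E} -> measurable_fun setT g.
Proof.
move=> nd; apply: (measurability _ (ErealGenOInfty.measurableE R)) => //.
move=> _ [_ [r ->] <-]; rewrite setTI; set U := g @^-1` _.
have -> : U = EFin @` (EFin @^-1` U) `|` (U `&` [set -oo%E; +oo%E]).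
  apply/seteqP; split => [[s| |] Ux|x [[s Us <-]//|[]//]].
  - by left; exists s.
  - by right; split => //; right.
  - by right; split => //; left.
apply: measurableU.
  apply: measurable_image_EFin; apply: is_interval_measurable => x y gx _ z /andP[xz _].
  move: gx; rewrite /U /= !in_itv /= !andbT => /lt_le_trans; apply.
  by apply: nd; rewrite lee_fin.
by rewrite setIUr; apply: measurableU; rewrite setI1; case: ifP.
Qed.

Section integral_sub_sigma.
Local Open Scope ereal_scope.
Context d (T : measurableType d) (R : realType) (mu : {measure set T -> \bar R}).
Variable G : set (set T).
Hypothesis G_measurable : forall A, <<s G>> A -> measurable A.
Local Notation TG := (g_sigma_algebraType G).

Lemma measurable_fun_sub_sigma d' (U : sigmaRingType d') (g : T -> U) :
  measurable_fun (setT : set TG) g -> measurable_fun setT g.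
Proof. by move=> mg _ B mB; apply: G_measurable; exact: (mg measurableT B mB). Qed.

Variables (D : set T) (mD : measurable D).

Section density.
Variable f : T -> R.
Hypothesis mf : measurable_fun setT f.
Hypothesis f_ge0 : forall x, D x -> (0 <= f x)%R.

Lemma integral_mul_nnsfun_sub_sigma (s : {nnsfun TG >-> R}) :
  \int[mu]_(x in D) ((f x)%:E * (s x)%:E) =
  \sum_(y \in range s) y%:E * \int[mu]_(x in s @^-1` [set y] `&` D) (f x)%:E.
Proof.
have ms y : measurable (s @^-1` [set y] : set T).
  exact: G_measurable (measurable_funPTI s (measurable_set1 y)).
have range_ge0 y : range s y -> (0 <= y)%R by move=> [x _ <-].
transitivity (\int[mu]_(x in D)
    \sum_(y \in range s) y%:E * (f x * \1_(s @^-1` [set y]) x)%:E).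
  apply: eq_integral => x _; rewrite (fimfunE s x) -EFinM mulr_fsumr.
  by rewrite fsumEFin //; congr (_%:E); apply: eq_fsbigr => y _; rewrite mulrCA.
rewrite ge0_integral_fsum //; last 2 first.
- move=> y; apply: measurable_funeM; apply/measurable_EFinP.
  by apply: measurable_funTS; apply: measurable_funM => //; exact: measurable_indic.
- move=> y x Dx; have [/range_ge0 y0|ny] := pselect (range s y).
    by rewrite mule_ge0 // lee_fin mulr_ge0 ?f_ge0.
  by rewrite preimage10 // indic0 mulr0 mule0.
apply: eq_fsbigr => y /set_mem /range_ge0 y0.
rewrite ge0_integralZl //.
- by under eq_integral do rewrite EFinM; rewrite integral_mul_indic.
- apply: measurable_funTS; apply/measurable_EFinP.
  by apply: measurable_funM => //; exact: measurable_indic.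
- by move=> x Dx; rewrite lee_fin mulr_ge0 ?f_ge0.
Qed.

Lemma integral_mul_sub_sigma_approx (h : TG -> \bar R)
    (mh : measurable_fun setT h) (h_ge0 : forall x, 0 <= h x) :
  \int[mu]_(x in D) ((f x)%:E * h x) =
  limn (fun n => \int[mu]_(x in D) ((f x)%:E * (nnsfun_approx measurableT mh n x)%:E)).
Proof.
rewrite -monotone_convergence //.
- apply: eq_integral => x _; apply/esym/cvg_lim => //; apply: cvgeZl => //.
  exact: (cvg_nnsfun_approx measurableT mh (fun x _ => h_ge0 x)).
- move=> n; apply/measurable_funTS/emeasurable_funM; apply/measurable_EFinP => //.
  exact/measurable_fun_sub_sigma/measurable_funPT.
- by move=> n x Dx; rewrite -EFinM lee_fin mulr_ge0 ?f_ge0.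
- move=> x Dx m n mn; rewrite lee_wpmul2l ?lee_fin ?f_ge0 //.
  exact/lefP/(nd_nnsfun_approx measurableT mh).
Qed.

End density.

Lemma integral_mul_sub_sigma_eq (f1 f2 : T -> R) :
    measurable_fun setT f1 -> measurable_fun setT f2 ->
    (forall x, D x -> (0 <= f1 x)%R) -> (forall x, D x -> (0 <= f2 x)%R) ->
    (forall A, <<s G>> A ->
      \int[mu]_(x in A `&` D) (f1 x)%:E = \int[mu]_(x in A `&` D) (f2 x)%:E) ->
  forall h : TG -> \bar R, measurable_fun setT h -> (forall x, 0 <= h x) ->
  \int[mu]_(x in D) ((f1 x)%:E * h x) = \int[mu]_(x in D) ((f2 x)%:E * h x).
Proof.
move=> mf1 mf2 f1_ge0 f2_ge0 f12 h mh h_ge0.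
rewrite (integral_mul_sub_sigma_approx mf1 f1_ge0 mh h_ge0).
rewrite (integral_mul_sub_sigma_approx mf2 f2_ge0 mh h_ge0).
congr (limn _); apply/funext => n.
rewrite !integral_mul_nnsfun_sub_sigma //; apply: eq_fsbigr => y _; rewrite f12 //.
exact: (measurable_funPTI (nnsfun_approx measurableT mh n) (measurable_set1 y)).
Qed.

End integral_sub_sigma.

Definition ipw_weight (R : numFieldType) (l q : bool) (p : R) : R :=
  (if l || q then 1 else 0) / (q%:R + (1 - q%:R) * p).

Lemma ipw_weightE (R : numFieldType) (l q : bool) (p : R) :
  ipw_weight l q p = if q then 1 else if l then p^-1 else 0.
Proof.
rewrite /ipw_weight; case: q; first by rewrite orbT subrr mul0r addr0 divr1.
by rewrite orbF subr0 mul1r add0r; case: l; rewrite ?mul1r ?mul0r.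
Qed.

Lemma ipw_weight_ge0 (R : numFieldType) (l q : bool) (p : R) :
  (~~ q -> 0 <= p) -> 0 <= ipw_weight l q p.
Proof.
rewrite ipw_weightE; case: q => // /(_ isT) p_ge0.
by case: l; rewrite ?invr_ge0.
Qed.

Section inverse_probability_weighting.
Local Open Scope ereal_scope.
Context d (T : measurableType d) (R : realType) (P : probability T R).
Variables (G : set (set T)) (L Q : T -> bool) (pi : T -> R).
Hypothesis G_measurable : forall A, <<s G>> A -> measurable A.
Hypotheses (mL : measurable [set w | L w]) (mQ : measurable [set w | Q w]).
Hypothesis pi_cond : cond_prob_L1_Q0 P <<s G>> L Q pi.
Hypothesis pi_gt0 : forall w, ~~ Q w -> (0 < pi w)%R.
Local Notation TG := (g_sigma_algebraType G).
Local Notation W w := (ipw_weight (L w) (Q w) (pi w)).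

Let notQE : [set w | ~~ Q w] = ~` [set w | Q w].
Proof. by apply/seteqP; split => w /= /negP. Qed.

Let mpi : measurable_fun (setT : set TG) pi.
Proof. by move=> _ B mB; rewrite setTI; exact: pi_cond.1. Qed.

Let mpiT : measurable_fun setT pi.
Proof. by move=> _ B mB; apply: G_measurable; rewrite setTI; exact: pi_cond.1. Qed.

Let mL_indic : measurable_fun setT (fun w => if L w then 1%R else 0%R : R).
Proof.
by apply: measurable_fun_ifT => //; apply: (measurable_fun_bool true); rewrite setTI.
Qed.

Let mW : measurable_fun setT (fun w => W w).
Proof.
under eq_fun do rewrite ipw_weightE.
apply: measurable_fun_ifT => //.
  by apply: (measurable_fun_bool true); rewrite setTI.
apply: measurable_fun_ifT => //; last exact: measurable_funV.
by apply: (measurable_fun_bool true); rewrite setTI.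
Qed.

Lemma integral_ipw_weight (g : TG -> \bar R) :
    measurable_fun setT g -> (forall w, 0 <= g w) ->
  \int[P]_w g w = \int[P]_w ((W w)%:E * g w).
Proof.
move=> mg g_ge0; have mgT := measurable_fun_sub_sigma G_measurable mg.
have Wg_ge0 w : 0 <= (W w)%:E * g w.
  by rewrite mule_ge0 // lee_fin ipw_weight_ge0 // => /pi_gt0/ltW.
rewrite (ge0_integral_setUC _ mQ) // [RHS](ge0_integral_setUC _ mQ) //; last first.
  by apply: emeasurable_funM => //; exact/measurable_EFinP/mW.
congr (_ + _).
  by apply: eq_integral => w /set_mem Qw; rewrite ipw_weightE Qw mul1e.
(* The density [h] of [integral_mul_sub_sigma_eq] must be nonnegative
   everywhere, whereas [pi] is only known to be positive off [Q], where it
   agrees with [|pi|]. *)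
have mpiV : measurable_fun (setT : set TG) (fun w => (`|pi w|^-1)%:E * g w).
  apply: emeasurable_funM => //; apply/measurable_EFinP/measurable_funV.
  by apply: measurableT_comp => //; exact: normr_measurable.
transitivity (\int[P]_(w in ~` [set w | Q w])
    ((pi w)%:E * ((`|pi w|^-1)%:E * g w))).
  apply: eq_integral => w /set_mem /negP /pi_gt0 pi_gt0w.
  by rewrite muleA -EFinM gtr0_norm // mulfV ?gt_eqF // mul1e.
have pi_condC A : <<s G>> A ->
    \int[P]_(w in A `&` ~` [set w | Q w]) (if L w then 1 else 0)%:E =
    \int[P]_(w in A `&` ~` [set w | Q w]) (pi w)%:E.
  by rewrite -notQE; exact: pi_cond.2.
rewrite -(integral_mul_sub_sigma_eq G_measurable (measurableC mQ) mL_indic mpiT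
  _ _ pi_condC mpiV).
- apply: eq_integral => w /set_mem /negP notQw.
  rewrite ipw_weightE (negbTE notQw) gtr0_norm ?pi_gt0 // muleA -EFinM.
  by case: (L w); rewrite ?mul1r ?mul0r.
- by move=> w _; case: (L w).
- by move=> w /negP /pi_gt0 /ltW.
- by move=> w; rewrite mule_ge0 // lee_fin invr_ge0.
Qed.

End inverse_probability_weighting.

Lemma lne_nondecreasing (R : realType) : {homo @lne R : x y / (x <= y)%E}.
Proof.
move=> x y xy; have [x_le0|x_gt0] := leP x 0%E; first by rewrite le0_lneNy // leNye.
rewrite lee_lne // in_itv /= ?leey ?(ltW x_gt0) //.
by rewrite (le_trans (ltW x_gt0) xy).
Qed.

Lemma cumhaz_nondecreasing (R : realType) (lambda0 : R -> R) :
    measurable_fun setT lambda0 -> (forall t, 0 <= lambda0 t) ->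
  {homo cumhaz lambda0 : s t / s <= t >-> (s <= t)%E}.
Proof.
move=> mlam lam_ge0 s t st; apply: ge0_subset_integral => //.
- by apply: measurable_funTS; exact/measurable_EFinP.
- by move=> x _; rewrite lee_fin.
- by move=> x /=; rewrite !in_itv /= => /andP[-> /le_trans]; apply.
Qed.

Section cox_loglik_measurable.
Context d (T : measurableType d) (R : realType) (p : nat).
Variables (beta : 'I_p -> R) (lambda0 : R -> R) (X : 'I_p -> T -> R).
Variables (Tt : T -> R) (Dl : T -> bool).
Hypotheses (mlam : measurable_fun setT lambda0) (lam_ge0 : forall t, 0 <= lambda0 t).
Hypotheses (mX : forall i, measurable_fun setT (X i)).
Hypotheses (mTt : measurable_fun setT Tt) (mDl : measurable_fun setT Dl).

Lemma measurable_linpred : measurable_fun setT (linpred beta X).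
Proof. by apply: measurable_sum => i; exact: measurable_funM. Qed.

Let mexp_lp : measurable_fun setT (fun w => expR (linpred beta X w)).
Proof. exact: measurableT_comp measurable_linpred. Qed.

Lemma measurable_cox_loglik : measurable_fun setT (cox_loglik beta lambda0 X Tt Dl).
Proof.
rewrite /cox_loglik /cox_surv.
apply: measurableT_comp; first exact: nondecreasing_emeasurable (@lne_nondecreasing R).
apply: emeasurable_funM.
  apply: measurable_fun_ifT => //; apply/measurable_EFinP.
  exact: measurable_funM (measurableT_comp mlam mTt) mexp_lp.
apply: measurableT_comp.
  by apply: nondecreasing_emeasurable => x y; rewrite lee_expeR.
apply: measurableT_comp; first exact: oppe_measurable.
apply: emeasurable_funM; last exact/measurable_EFinP.
apply: measurableT_comp mTt.
exact: nondecreasing_measurable_ereal (cumhaz_nondecreasing mlam lam_ge0).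
Qed.

End cox_loglik_measurable.

Section observed_data_sigma.
Context d (T : measurableType d) (R : realType) (p : nat).
Variables (Tt : T -> R) (Dl : T -> bool) (X : 'I_p -> T -> R).

Definition observed_events : set (set T) :=
  [set A | (exists B, measurable B /\ A = Tt @^-1` B) \/ A = [set w | Dl w]
            \/ (exists i B, measurable B /\ A = X i @^-1` B)].

Local Notation TG := (g_sigma_algebraType observed_events).

Lemma observed_events_measurable :
    measurable_fun setT Tt -> measurable [set w | Dl w] ->
    (forall i, measurable_fun setT (X i)) ->
  forall A, <<s observed_events>> A -> measurable A.
Proof.
move=> mTt mDl mX; apply: smallest_sub; first exact: sigma_algebra_measurable.
move=> _ [[B [mB ->]]|[->|[i [B [mB ->]]]]] //.
- by rewrite -[_ @^-1` _]setTI; exact: mTt.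
- by rewrite -[_ @^-1` _]setTI; exact: mX.
Qed.

Lemma measurable_obs_time_sigma : measurable_fun (setT : set TG) Tt.
Proof. by move=> _ B mB; rewrite setTI; apply: sub_sigma_algebra; left; exists B. Qed.

Lemma measurable_event_sigma : measurable_fun (setT : set TG) Dl.
Proof.
apply: (measurable_fun_bool true); rewrite setTI.
by apply: sub_sigma_algebra; right; left.
Qed.

Lemma measurable_covariate_sigma i : measurable_fun (setT : set TG) (X i).
Proof.
by move=> _ B mB; rewrite setTI; apply: sub_sigma_algebra; right; right; exists i, B.
Qed.

End observed_data_sigma.

Theorem proposition3p1
  (d : measure_display) (Omega : measurableType d) (R : realType)
  (P : probability Omega R) (p : nat)
  (T C1 C2 : Omega -> R) (L : Omega -> bool) (X : 'I_p -> Omega -> R)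
  (pi : Omega -> R)
  (mT : measurable_fun setT T) (mC1 : measurable_fun setT C1)
  (mC2 : measurable_fun setT C2) (mL : measurable [set w | L w])
  (mX : forall i, measurable_fun setT (X i))
  (* pi = P(L = 1 | X, Q = 0) *)
  (hpi : cond_prob_L1_Q0 P (sigma_X X) L (trial_ind T C1) pi)
  (* positivity: P(L = 1 | X, Q = 0) > 0 *)
  (hpos : forall w, ~~ trial_ind T C1 w -> 0 < pi w)
  (* CLAR: P(L = 1 | T~, Delta, Q = 0, X) = P(L = 1 | Q = 0, X) *)
  (hCLAR : cond_prob_L1_Q0 P
             (sigma_TDX (obs_time T C1 C2) (event_ind T C1 C2) X)
             L (trial_ind T C1) pi)
  (beta : 'I_p -> R) (lambda0 : R -> R)
  (mlam : measurable_fun setT lambda0) (lam_ge0 : forall t, 0 <= lambda0 t) :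
  (\int[P]_w cox_loglik beta lambda0 X (obs_time T C1 C2) (event_ind T C1 C2) w =
   \int[P]_w (((if L w || trial_ind T C1 w then 1 else 0)
              / ((trial_ind T C1 w)%:R + (1 - (trial_ind T C1 w)%:R) * pi w))%:E
             * cox_loglik beta lambda0 X (obs_time T C1 C2) (event_ind T C1 C2) w))%E.
Proof.
set Tt := obs_time T C1 C2; set Dl := event_ind T C1 C2; set Q := trial_ind T C1.
have mTt : measurable_fun setT Tt by apply: measurable_minr => //; exact: measurable_maxr.
have mDl : measurable [set w | Dl w].
  rewrite -[S in measurable S]setTI.
  by apply: measurable_fun_ler => //; exact: measurable_maxr.
have mQ : measurable [set w | Q w].
  by rewrite -[S in measurable S]setTI; exact: measurable_fun_ler.
have G_measurable := observed_events_measurable mTt mDl mX.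
have ml : measurable_fun (setT : set (g_sigma_algebraType (observed_events Tt Dl X)))
    (cox_loglik beta lambda0 X Tt Dl).
  apply: measurable_cox_loglik => //; first exact: measurable_covariate_sigma.
  - exact: measurable_obs_time_sigma.
  - exact: measurable_event_sigma.
have W_ge0 w : 0 <= ipw_weight (L w) (Q w) (pi w).
  by apply: ipw_weight_ge0 => /hpos /ltW.
rewrite integralE [RHS]integralE (funeposMl _ W_ge0) (funenegMl _ W_ge0).
congr (_ - _)%E; apply: (integral_ipw_weight G_measurable mL mQ hCLAR hpos) => //.
- exact: measurable_funepos.
- exact: measurable_funeneg.
Qed.
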